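(* Let $G=(V,E)$ be a finite simple undirected graph with $n=|V|$ and let $0<p<1$. Let $S_0=V$ and, for $i=1,\dots,n$, let $S_i=S_{i-1}\setminus\{\ell_i\}$ where $\ell_i\in S_{i-1}$ is any vertex with $d_{\ell_i}(S_{i-1})=\min_{u\in S_{i-1}}d_u(S_{i-1})$ (the standard peeling algorithm, ties broken arbitrarily). Let $S'$ be a set among $S_0,S_1,\dots,S_n$ maximizing $f_p$. Then $2\,f_p(S')\ge \max_{T\subseteq V}f_p(T)$, and equivalently $2^{1/p}M_p(S')\ge\max_{T\subseteq V}M_p(T)$.
   Context: For $v\in V$, $N(v)=\{u\in V:(u,v)\in E\}$ (so $v\notin N(v)$). For $S\subseteq V$ and $v\in V$, $d_v(S)=|N(v)\cap S|$. For $p>0$ and nonempty $S\subseteq V$, $f_p(S)=\frac{1}{|S|}\sum_{v\in S}d_v(S)^p$ (with the convention $0^p=0$), $f_p(\emptyset)=0$, and the $p$-density is $M_p(S)=f_p(S)^{1/p}$. *)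

From HB Require Import structures.
From mathcomp Require Import all_boot all_order all_algebra.
From mathcomp Require Import all_classical all_reals all_analysis.
Set Implicit Arguments. Unset Strict Implicit. Unset Printing Implicit Defensive.
Import Order.TTheory GRing.Theory Num.Theory.
Local Open Scope ring_scope.

Definition deg (V : finType) (e : rel V) (S : {set V}) (v : V) : nat :=
  #|[set u in S | e u v]|.

Definition rpow (R : realType) (x p : R) : R :=
  if x == 0 then 0 else x `^ p.

Definition fp (R : realType) (V : finType) (e : rel V) (p : R) (S : {set V}) : R :=
  if S == finset.set0 then 0
  else (#|S|%:R)^-1 * \sum_(v in S) rpow ((deg e S v)%:R) p.

Definition Mp (R : realType) (V : finType) (e : rel V) (p : R) (S : {set V}) : R :=
  rpow (fp e p S) p^-1.

Definition peeling (V : finType) (e : rel V) (S : nat -> {set V}) (l : nat -> V) : Prop :=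
  S 0%N = [set: V] /\
  forall i : nat, (1 <= i <= #|V|)%N ->
    [/\ l i \in S i.-1,
        (forall u, u \in S i.-1 -> (deg e (S i.-1) (l i) <= deg e (S i.-1) u)%N)
      & S i = S i.-1 :\ l i].

From HB Require Import structures.
From mathcomp Require Import all_boot all_order all_algebra.
From mathcomp Require Import all_classical all_reals all_analysis.
From mathcomp Require Import ring lra.
Set Implicit Arguments. Unset Strict Implicit. Unset Printing Implicit Defensive.
Import Order.TTheory GRing.Theory Num.Theory.
Local Open Scope ring_scope.

(* Let [t v] be the step at which the peeling removes [v] and [D v] the degree
   of [v] at that moment.  Since [D v] is the minimum degree of [S (t v - 1)],
   [f_p (S (t v - 1)) >= (D v)^p].  Charging every edge inside a set [T] to its
   endpoint removed first gives [sum_(v in T) d_v(T) <= 2 |T| c] with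
   [c = max_(v in T) D v], and concavity of [x |-> x^p] (its tangent at [c])
   turns this average-degree bound into [f_p(T) <= (1 + p) c^p <= 2 c^p]. *)

Lemma rpow_ge0 (R : realType) (x p : R) : 0 <= rpow x p.
Proof. by rewrite /rpow; case: ifP => // _; exact: powR_ge0. Qed.

Lemma rpow0 (R : realType) (p : R) : rpow 0 p = 0.
Proof. by rewrite /rpow eqxx. Qed.

Lemma ler_rpow (R : realType) (p x y : R) : 0 <= p -> 0 <= x -> x <= y ->
  rpow x p <= rpow y p.
Proof.
move=> p_ge0 x_ge0 le_xy; have [->|x_neq0] := eqVneq x 0; first by rewrite rpow0 rpow_ge0.
have y_gt0 : 0 < y by apply: lt_le_trans le_xy; rewrite lt0r x_neq0.
rewrite /rpow (negbTE x_neq0) gt_eqF //.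
by apply: ge0_ler_powR; rewrite // nnegrE ltW.
Qed.

Lemma ler_rpow_scale (R : realType) (q a x y : R) :
  0 <= q -> 0 <= a -> 0 <= x -> x <= a * y -> rpow x q <= a `^ q * rpow y q.
Proof.
move=> q_ge0 a_ge0 x_ge0 le_xay.
have [->|x_neq0] := eqVneq x 0; first by rewrite rpow0 mulr_ge0 ?powR_ge0 ?rpow_ge0.
have ay_gt0 : 0 < a * y by apply: lt_le_trans le_xay; rewrite lt0r x_neq0.
have a_gt0 : 0 < a.
  by rewrite lt0r a_ge0 andbT; apply: contraTneq ay_gt0 => ->; rewrite mul0r ltxx.
have y_gt0 : 0 < y by rewrite -(pmulr_rgt0 y a_gt0).
rewrite /rpow (negbTE x_neq0) gt_eqF // -(powRM _ (ltW a_gt0) (ltW y_gt0)).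
by apply: ge0_ler_powR; rewrite // nnegrE ltW.
Qed.

Section ConcavePower.
Variables (R : realType) (p : R).
Hypotheses (p_gt0 : 0 < p) (p_lt1 : p < 1).

(* Young's inequality with the conjugate exponents 1/p and 1/(1-p). *)
Lemma powR_le_tangent1 (y : R) : 0 <= y -> y `^ p <= p * y + (1 - p).
Proof.
move=> y_ge0; have q_gt0 : 0 < 1 - p by rewrite subr_gt0.
have conj : p^-1^-1 + (1 - p)^-1^-1 = 1 by rewrite !invrK addrC subrK.
have := @conjugate_powR R (y `^ p) 1 p^-1 (1 - p)^-1 (powR_ge0 _ _) ler01.
move=> /(_ _ _ conj); rewrite !invr_gt0 p_gt0 q_gt0 => /(_ isT isT).
by rewrite mulr1 -powRrM mulfV ?gt_eqF // powRr1 // powR1 !invrK mul1r mulrC.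
Qed.

Lemma rpow_le_tangent (x c : R) : 0 <= x -> 0 < c ->
  rpow x p <= rpow c p * (p * (x / c) + (1 - p)).
Proof.
move=> x_ge0 c_gt0; have [->|x_neq0] := eqVneq x 0.
  by rewrite rpow0 mul0r mulr0 add0r mulr_ge0 ?rpow_ge0 // subr_ge0 ltW.
rewrite /rpow (negbTE x_neq0) gt_eqF // -{1}(divfK (lt0r_neq0 c_gt0) x) mulrC.
rewrite powRM ?(ltW c_gt0) ?divr_ge0 ?(ltW c_gt0) //.
by rewrite ler_pM2l ?powR_gt0 // powR_le_tangent1 // divr_ge0 // ltW.
Qed.

Lemma fp_le_avg_deg (V : finType) (e : rel V) (T : {set V}) (a c : R) :
  0 <= a -> 0 <= c ->
  \sum_(v in T) (deg e T v)%:R <= a * (#|T|%:R * c) ->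
  fp e p T <= (p * a + (1 - p)) * rpow c p.
Proof.
move=> a_ge0 c_ge0 sum_le.
have coef_ge0 : 0 <= p * a + (1 - p).
  by rewrite addr_ge0 ?mulr_ge0 ?(ltW p_gt0) // subr_ge0 ltW.
rewrite /fp; case: ifPn => [_|T_neq0]; first by rewrite mulr_ge0 ?rpow_ge0.
have T_gt0 : 0 < #|T|%:R :> R by rewrite ltr0n card_gt0.
have [c0|c_gt0] := eqVneq c 0.
  rewrite c0 rpow0 mulr0 big1 ?mulr0 // => v vT.
  suff -> : deg e T v = 0%N by rewrite rpow0.
  apply/eqP; rewrite -(eqr_nat R) eq_le ler0n andbT.
  move: sum_le; rewrite c0 !mulr0 (bigD1 v vT) /=.
  have : 0 <= \sum_(u in T | u != v) (deg e T u)%:R :> R by exact: sumr_ge0.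
  lra.
have {}c_gt0 : 0 < c by rewrite lt0r c_gt0.
rewrite ler_pdivrMl //.
apply: (@le_trans _ _ (\sum_(v in T) rpow c p * (p * ((deg e T v)%:R / c) + (1 - p)))).
  by apply: ler_sum => v _; exact: rpow_le_tangent.
rewrite -mulr_sumr big_split /= -mulr_sumr -mulr_suml sumr_const -[(1 - p) *+ _]mulr_natr.
have avg_le : (\sum_(v in T) (deg e T v)%:R) / c <= a * #|T|%:R.
  by rewrite ler_pdivrMr // -mulrA.
have -> : #|T|%:R * ((p * a + (1 - p)) * rpow c p)
    = rpow c p * (p * (a * #|T|%:R) + (1 - p) * #|T|%:R) by ring.
by rewrite ler_wpM2l ?rpow_ge0 // lerD2r ler_wpM2l // ltW.
Qed.

End ConcavePower.

Lemma degE (V : finType) (e : rel V) (S : {set V}) (v : V) :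
  deg e S v = (\sum_(u in S) e u v)%N.
Proof.
rewrite /deg -sum1_card big_mkcond [RHS]big_mkcond /=.
by apply: eq_bigr => u _; rewrite inE; case: (u \in S); case: (e u v).
Qed.

Lemma fp_ge0 (R : realType) (V : finType) (e : rel V) (p : R) (S : {set V}) :
  0 <= fp e p S.
Proof.
rewrite /fp; case: ifP => // _.
by rewrite mulr_ge0 ?invr_ge0 // sumr_ge0 // => v _; exact: rpow_ge0.
Qed.

Lemma rpow_mindeg_le_fp (R : realType) (V : finType) (e : rel V) (p : R)
    (S : {set V}) (c : nat) :
  0 <= p -> S != finset.set0 -> (forall u, u \in S -> (c <= deg e S u)%N) ->
  rpow c%:R p <= fp e p S.
Proof.
move=> p_ge0 S_neq0 mindeg; rewrite /fp (negbTE S_neq0).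
rewrite ler_pdivlMl ?ltr0n ?card_gt0 // mulr_natl -sumr_const.
by apply: ler_sum => u uS; rewrite ler_rpow // ler_nat mindeg.
Qed.

Section Peeling.
Variables (V : finType) (e : rel V) (S : nat -> {set V}) (l : nat -> V).
Hypothesis peelS : peeling e S l.

Lemma card_peel j : (j <= #|V|)%N -> #|S j| = (#|V| - j)%N.
Proof.
case: peelS => S0 peel_step; elim: j => [|j IHj] j_le; first by rewrite S0 cardsT subn0.
have [lS _ ->] := peel_step j.+1 j_le.
rewrite /= in lS *; have := cardsD1 (l j.+1) (S j).
by rewrite lS IHj ?(ltnW j_le) // add1n subnS => ->.
Qed.

Lemma peel_end : S #|V| = finset.set0.
Proof. by apply: cards0_eq; rewrite card_peel // subnn. Qed.

Lemma peeled_eventually u : exists j, u \notin S j.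
Proof. by exists #|V|; rewrite peel_end inE. Qed.

Definition peel_time u : nat := ex_minn (peeled_eventually u).

Lemma peel_timeP u :
  [/\ (0 < peel_time u <= #|V|)%N,
      forall j, (j < peel_time u)%N -> u \in S j
    & l (peel_time u) = u].
Proof.
rewrite /peel_time; case: ex_minnP => m uSm m_min; case: peelS => S0 peel_step.
have m_gt0 : (0 < m)%N by case: m uSm {m_min} => //; rewrite S0 inE.
have m_le : (m <= #|V|)%N by apply: m_min; rewrite peel_end inE.
have uS j : (j < m)%N -> u \in S j.
  by move=> lt_jm; apply/negPn/negP => /m_min; rewrite leqNgt lt_jm.
split=> //; first by rewrite m_gt0.
have [_ _ Sm] := peel_step m (ltac:(by rewrite m_gt0)).
have : u \in S m.-1 by apply: uS; rewrite prednK.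
by move: uSm; rewrite Sm !inE negb_and negbK => /orP [/eqP ->|/negbTE ->].
Qed.

Definition peel_deg u : nat := deg e (S (peel_time u).-1) u.

Lemma rpow_peel_deg_le_fp (R : realType) (p : R) u : 0 <= p ->
  rpow (peel_deg u)%:R p <= fp e p (S (peel_time u).-1).
Proof.
move=> p_ge0; have [/andP [t_gt0 t_le] uS lu] := peel_timeP u.
have uSt : u \in S (peel_time u).-1 by apply: uS; rewrite prednK.
apply: rpow_mindeg_le_fp => //; first by apply/set0Pn; exists u.
have [_ peel_step] := peelS.
have [_ mindeg _] := peel_step (peel_time u) (ltac:(by rewrite t_gt0 t_le)).
by move=> w /mindeg; rewrite lu.
Qed.

(* Charge each edge of [T] to its endpoint peeled first: the other endpoint is
   still present at that step, so the edge is counted by that [peel_deg]. *)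
Lemma sum_deg_le_peel_deg (e_sym : symmetric e) (T : {set V}) :
  (\sum_(v in T) deg e T v <= 2 * \sum_(v in T) peel_deg v)%N.
Proof.
pose charged := (\sum_(v in T) \sum_(u in T) (e u v && (peel_time v <= peel_time u)))%N.
have charged_sym :
    (\sum_(v in T) \sum_(u in T) (e u v && (peel_time u <= peel_time v)))%N = charged.
  by rewrite exchange_big; apply: eq_bigr => u _; apply: eq_bigr => v _; rewrite e_sym.
have deg_le : (\sum_(v in T) deg e T v <= charged + charged)%N.
  rewrite -{2}charged_sym -big_split; apply: leq_sum => v _.
  rewrite degE -big_split; apply: leq_sum => u _ /=.
  by case: (e u v) (leq_total (peel_time v) (peel_time u)) => //=; rewrite addn_gt0 !lt0b.
have charged_le : (charged <= \sum_(v in T) peel_deg v)%N.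
  apply: leq_sum => v _; rewrite /peel_deg degE big_mkcond [leqRHS]big_mkcond.
  apply: leq_sum => u _ /=; case: (u \in T) => //.
  case: (leqP (peel_time v) (peel_time u)) => [le_vu|]; last by rewrite andbF.
  have [/andP [tv_gt0 _] _ _] := peel_timeP v; have [_ uS _] := peel_timeP u.
  by rewrite andbT uS // (leq_trans _ le_vu) // prednK.
by rewrite mul2n -addnn (leq_trans deg_le) // leq_add.
Qed.

Lemma fp_le_twice_peeled (R : realType) (p : R) :
  symmetric e -> 0 < p -> p < 1 ->
  forall T : {set V}, exists2 j, (j <= #|V|)%N & fp e p T <= 2 * fp e p (S j).
Proof.
move=> e_sym p_gt0 p_lt1 T; case: (set_0Vmem T) => [->|[v0 v0T]].
  by exists 0%N => //; rewrite /fp eqxx mulr_ge0 ?fp_ge0.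
pose vm := [arg max_(v > v0 in T) peel_deg v].
have vm_max v : v \in T -> (peel_deg v <= peel_deg vm)%N.
  by rewrite /vm; case: arg_maxnP => // w _; apply.
have [/andP [_ t_le] _ _] := peel_timeP vm.
exists (peel_time vm).-1; first exact: leq_trans (leq_pred _) t_le.
have deg_sum_le :
    \sum_(v in T) (deg e T v)%:R <= 2 * (#|T|%:R * (peel_deg vm)%:R) :> R.
  rewrite -natr_sum -!natrM ler_nat (leq_trans (sum_deg_le_peel_deg e_sym T)) //.
  by rewrite leq_mul2l -sum_nat_const leq_sum.
apply: le_trans (fp_le_avg_deg p_gt0 p_lt1 (ler0n _ 2) (ler0n _ _) deg_sum_le) _.
have := rpow_peel_deg_le_fp vm (ltW p_gt0); have := rpow_ge0 (peel_deg vm)%:R p.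
nra.
Qed.

End Peeling.

Theorem lemma5 (R : realType) (V : finType) (e : rel V)
  (e_sym : symmetric e) (e_irr : irreflexive e)
  (p : R) (p_gt0 : 0 < p) (p_lt1 : p < 1)
  (S : nat -> {set V}) (l : nat -> V) (HS : peeling e S l)
  (k : nat) (hk : (k <= #|V|)%N)
  (hmax : forall j : nat, (j <= #|V|)%N -> fp e p (S j) <= fp e p (S k)) :
  (forall T : {set V}, fp e p T <= 2 * fp e p (S k)) /\
  (forall T : {set V}, Mp e p T <= 2 `^ p^-1 * Mp e p (S k)).
Proof.
have fp_le T : fp e p T <= 2 * fp e p (S k).
  have [j j_le fpT_le] := fp_le_twice_peeled HS e_sym p_gt0 p_lt1 T.
  by rewrite (le_trans fpT_le) // ler_pM2l // hmax.
by split=> // T; apply: ler_rpow_scale; rewrite ?fp_ge0 ?invr_ge0 ?(ltW p_gt0).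
Qed.
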